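(* Let $\lambda_1,\lambda_2$ be as in the context. For any $(c,\theta)\in\Omega$ and any $B\in[\lambda_2^2,\lambda_1^2]$ we have $$c^2+2\cos\theta\,B-\frac{\sin^2\theta}{c^2}B^2>0.$$
   Context: Either $\lambda_1>\lambda_2>0$ or $\lambda_1=\lambda_2=1$. For $c>0$ put $\theta_c^+=\pi$ if $c>\sqrt2\lambda_1$ and $\theta_c^+=\arccos(1-c^2/\lambda_1^2)\in(0,\pi]$ if $0<c\le\sqrt2\lambda_1$. $\Omega=\{(c,\theta)\in\mathbb{R}^2: c>0,\ \theta\in(-\theta_c^+,\theta_c^+)\}$. *)

From Stdlib Require Export Reals.
Open Scope R_scope.

Definition lambda_ok (l1 l2 : R) : Prop :=
  (l1 > l2 /\ l2 > 0) \/ (l1 = 1 /\ l2 = 1).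

Definition theta_plus (l1 c : R) : R :=
  if Rle_dec c (sqrt 2 * l1) then acos (1 - c ^ 2 / l1 ^ 2) else PI.

Definition in_Omega (l1 c theta : R) : Prop :=
  c > 0 /\ - theta_plus l1 c < theta /\ theta < theta_plus l1 c.

(* The expression equals (c^2 - B (1 - cos theta)) (c^2 + B (1 + cos theta)) / c^2.
   The second factor is positive because B > 0 and cos theta >= -1.  For the first,
   theta in Omega forces cos theta > 1 - c^2 / l1^2 (or c^2 > 2 l1^2 when theta_c^+ = PI),
   i.e. c^2 > l1^2 (1 - cos theta) >= B (1 - cos theta) since B <= l1^2. *)
From Stdlib Require Import Reals Lra Psatz.
Open Scope R_scope.

Lemma quadratic_in_B_factor (c t B : R) : c <> 0 ->
  c ^ 2 + 2 * cos t * B - (sin t ^ 2 / c ^ 2) * B ^ 2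
  = (c ^ 2 - B * (1 - cos t)) * (c ^ 2 + B * (1 + cos t)) / c ^ 2.
Proof.
  intros Hc.
  replace (sin t ^ 2) with (1 - cos t ^ 2)
    by (pose proof (sin2_cos2 t); unfold Rsqr in *; lra).
  field; exact Hc.
Qed.

Lemma cos_gt_of_abs_lt_acos (a t : R) : -1 <= a <= 1 ->
  - acos a < t < acos a -> a < cos t.
Proof.
  intros Ha Ht.
  pose proof (acos_bound a).
  rewrite <- (cos_acos a Ha).
  destruct (Rle_dec 0 t).
  - apply cos_decreasing_1; lra.
  - rewrite <- (cos_neg t); apply cos_decreasing_1; lra.
Qed.

Lemma in_Omega_sq_gt (l1 c t : R) : l1 > 0 -> in_Omega l1 c t ->
  l1 ^ 2 * (1 - cos t) < c ^ 2.
Proof.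
  intros Hl1 [Hc Ht]; unfold theta_plus in Ht.
  assert (Hsqrt2 : sqrt 2 * sqrt 2 = 2) by (apply sqrt_sqrt; lra).
  assert (sqrt 2 > 0) by (apply sqrt_lt_R0; lra).
  destruct (Rle_dec c (sqrt 2 * l1)) as [Hle | Hgt].
  - assert (Hl1sq : l1 ^ 2 > 0) by nra.
    assert (Hc2 : c ^ 2 <= 2 * l1 ^ 2) by nra.
    assert (Hmul : l1 ^ 2 * (c ^ 2 / l1 ^ 2) = c ^ 2) by (field; lra).
    assert (Hratio : 0 <= c ^ 2 / l1 ^ 2 <= 2) by (split; nra).
    assert (Hcos : 1 - c ^ 2 / l1 ^ 2 < cos t)
      by (apply cos_gt_of_abs_lt_acos; lra).
    nra.
  - pose proof (COS_bound t).
    assert (c * c > (sqrt 2 * l1) * (sqrt 2 * l1))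
      by (apply Rmult_le_0_lt_compat; nra).
    nra.
Qed.

Lemma lambda_ok_pos (l1 l2 : R) : lambda_ok l1 l2 -> l1 > 0 /\ l2 > 0.
Proof. intros [[? ?] | [? ?]]; lra. Qed.

Theorem lemma5p1 (l1 l2 c theta B : R) :
  lambda_ok l1 l2 ->
  in_Omega l1 c theta ->
  l2 ^ 2 <= B <= l1 ^ 2 ->
  c ^ 2 + 2 * cos theta * B - (sin theta ^ 2 / c ^ 2) * B ^ 2 > 0.
Proof.
  intros Hl HOmega HB.
  destruct (lambda_ok_pos l1 l2 Hl) as [Hl1 Hl2].
  pose proof (in_Omega_sq_gt l1 c theta Hl1 HOmega) as Hc2.
  assert (Hc : c > 0) by apply HOmega.
  assert (HBpos : B > 0) by nra.
  pose proof (COS_bound theta).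
  rewrite quadratic_in_B_factor by lra.
  apply Rdiv_lt_0_compat; [apply Rmult_gt_0_compat |]; nra.
Qed.
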